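(* (Soundness) For every set $\Phi\subseteq\mathcal{L}_T$ and every $\alpha\in\mathcal{L}_T$: if $\Phi\vdash\alpha$ in SBTrust, then $\Phi\models\alpha$.
   Context: Propositional formulas: $\varphi::=\bot\mid p\mid\varphi\land\varphi\mid\varphi\lor\varphi\mid\varphi\to\varphi\mid\varphi\leftrightarrow\varphi\mid\neg\varphi$ over a countable set of variables. $\mathcal{L}_T$: $\alpha::=\varphi\mid\varphi\rightsquigarrow\varphi\mid B(\alpha)\mid\alpha*\alpha\mid\neg\alpha$ ($\varphi$ propositional, $*\in\{\land,\lor,\to,\leftrightarrow\}$). SBTrust is the Hilbert system (rule applications must yield formulas of $\mathcal{L}_T$; $\varphi,\psi,\chi,\varphi_i,\psi_i$ propositional; $\alpha,\beta\in\mathcal{L}_T$) with: all classical tautologies over $\mathcal{L}_T$ and Modus Ponens; $\mathbf{ID}$: $\varphi\rightsquigarrow\varphi$; $\mathbf{ST}$: $(\varphi\rightsquigarrow\bot)\to\neg\varphi$; $\mathbf{SH}$: $((\psi\land\chi)\rightsquigarrow\varphi)\to(\psi\rightsquigarrow(\chi\to\varphi))$; $\mathbf{LL+}$: $(\neg(\varphi\leftrightarrow\psi)\rightsquigarrow\bot)\to((\varphi\rightsquigarrow\chi)\leftrightarrow(\psi\rightsquigarrow\chi))$; rule $\mathbf{RCK}$: from $(\varphi_1\land\dots\land\varphi_n)\to\varphi_{n+1}$ infer $((\psi\rightsquigarrow\varphi_1)\land\dots\land(\psi\rightsquigarrow\varphi_n))\to(\psi\rightsquigarrow\varphi_{n+1})$;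 rule $\mathbf{S5_F}$: from $(\ell_1\land\dots\land\ell_n)\to\chi$ infer $(\ell_1\land\dots\land\ell_n)\to(\neg\chi\rightsquigarrow\bot)$, each $\ell_j$ being $\varphi_j\rightsquigarrow\psi_j$ or $\neg(\varphi_j\rightsquigarrow\psi_j)$, $\chi$ propositional; $\mathbf{KB}$: $B(\alpha\to\beta)\to(B(\alpha)\to B(\beta))$; $\mathbf{DB}$: $B(\alpha)\to\neg B(\neg\alpha)$; $\mathbf{4B}$: $B(\alpha)\to B(B(\alpha))$; necessitation for $B$: from $\alpha$ infer $B(\alpha)$. $\Phi\vdash\alpha$ is derivability from assumptions in the usual sense (necessitation applied only to theorems). A Trust model is $\mathcal{M}=\langle S,(S_i)_{i\in I},(\succeq_i)_{i\in I},R,V\rangle$: $R\subseteq S\times S$ serial and transitive; $(S_i)$ a partition of $S$; $\succeq_i\subseteq S_i\times S_i$ arbitrary; $V$ maps variables to subsets of $S$; and for each $i$ and propositional $\varphi$, $\|\varphi\|_i\neq\emptyset\Rightarrow\mathit{most}(\|\varphi\|_i)\neq\emptyset$, with $\|\varphi\|_i=\{v\in S_i:\mathcal{M},v\models\varphi\}$, $\mathit{most}(X)=\{s\in X:\forall v\in X\,(v\succeq_i s\Rightarrow s\succeq_i v)\}$. Truth: $s\models p$ iff $s\in V(p)$; Boolean clauses as usual; $s\models\varphi\rightsquigarrow\psi$ iff $\mathit{most}(\|\varphi\|_i)\subseteq\|\psi\|_i$ where $s\in S_i$; $s\models B(\alpha)$ iff $v\models\alpha$ for every $v$ with $sRv$.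 $\Phi\models\alpha$: in every Trust model, every state satisfying all of $\Phi$ satisfies $\alpha$. *)

From Stdlib Require Import List Bool.
Import ListNotations.

Inductive pform : Type :=
| PBot : pform
| PVar : nat -> pform
| PAnd : pform -> pform -> pform
| POr  : pform -> pform -> pform
| PImp : pform -> pform -> pform
| PIff : pform -> pform -> pform
| PNeg : pform -> pform.

Inductive tform : Type :=
| TProp : pform -> tform
| TCond : pform -> pform -> tform
| TB    : tform -> tform
| TAnd  : tform -> tform -> tform
| TOr   : tform -> tform -> tform
| TImp  : tform -> tform -> tform
| TIff  : tform -> tform -> tform
| TNeg  : tform -> tform.

Fixpoint peval (v : nat -> bool) (f : pform) : bool :=
  match f with
  | PBot => false
  | PVar n => v n
  | PAnd a b => peval v a && peval v b
  | POr a b => peval v a || peval v b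
  | PImp a b => implb (peval v a) (peval v b)
  | PIff a b => eqb (peval v a) (peval v b)
  | PNeg a => negb (peval v a)
  end.

Fixpoint teval (v : nat -> bool) (c : pform -> pform -> bool) (bv : tform -> bool)
  (f : tform) : bool :=
  match f with
  | TProp p => peval v p
  | TCond p q => c p q
  | TB a => bv a
  | TAnd a b => teval v c bv a && teval v c bv b
  | TOr a b => teval v c bv a || teval v c bv b
  | TImp a b => implb (teval v c bv a) (teval v c bv b)
  | TIff a b => eqb (teval v c bv a) (teval v c bv b)
  | TNeg a => negb (teval v c bv a)
  end.

Definition tautology (f : tform) : Prop :=
  forall v c bv, teval v c bv f = true.

(** n-ary conjunctions phi_1 /\ ... /\ phi_n (n >= 1), given as head and tail. *)
Fixpoint pconj (a : pform) (l : list pform) : pform :=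
  match l with
  | [] => a
  | b :: l' => PAnd a (pconj b l')
  end.

Fixpoint tconj (a : tform) (l : list tform) : tform :=
  match l with
  | [] => a
  | b :: l' => TAnd a (tconj b l')
  end.

Definition is_lit (l : tform) : Prop :=
  exists p q, l = TCond p q \/ l = TNeg (TCond p q).

Inductive Thm : tform -> Prop :=
| Thm_taut : forall a, tautology a -> Thm a
| Thm_MP : forall a b, Thm (TImp a b) -> Thm a -> Thm b
| Thm_ID : forall p, Thm (TCond p p)
| Thm_ST : forall p, Thm (TImp (TCond p PBot) (TProp (PNeg p)))
| Thm_SH : forall p q r,
    Thm (TImp (TCond (PAnd q r) p) (TCond q (PImp r p)))
| Thm_LL : forall p q r,
    Thm (TImp (TCond (PNeg (PIff p q)) PBot) (TIff (TCond p r) (TCond q r)))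
| Thm_RCK : forall (psi p1 pn1 : pform) (ps : list pform),
    Thm (TProp (PImp (pconj p1 ps) pn1)) ->
    Thm (TImp (tconj (TCond psi p1) (map (TCond psi) ps)) (TCond psi pn1))
| Thm_S5F : forall (l1 : tform) (ls : list tform) (chi : pform),
    is_lit l1 -> Forall is_lit ls ->
    Thm (TImp (tconj l1 ls) (TProp chi)) ->
    Thm (TImp (tconj l1 ls) (TCond (PNeg chi) PBot))
| Thm_KB : forall a b, Thm (TImp (TB (TImp a b)) (TImp (TB a) (TB b)))
| Thm_DB : forall a, Thm (TImp (TB a) (TNeg (TB (TNeg a))))
| Thm_4B : forall a, Thm (TImp (TB a) (TB (TB a)))
| Thm_Nec : forall a, Thm a -> Thm (TB a).

Inductive Deriv (Phi : tform -> Prop) : tform -> Prop :=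
| D_thm : forall a, Thm a -> Deriv Phi a
| D_ass : forall a, Phi a -> Deriv Phi a
| D_MP : forall a b, Deriv Phi (TImp a b) -> Deriv Phi a -> Deriv Phi b.

Fixpoint psat {S : Type} (V : nat -> S -> Prop) (s : S) (f : pform) : Prop :=
  match f with
  | PBot => False
  | PVar n => V n s
  | PAnd a b => psat V s a /\ psat V s b
  | POr a b => psat V s a \/ psat V s b
  | PImp a b => psat V s a -> psat V s b
  | PIff a b => (psat V s a <-> psat V s b)
  | PNeg a => ~ psat V s a
  end.

Definition ext {S I : Type} (idx : S -> I) (V : nat -> S -> Prop) (i : I) (phi : pform)
  : S -> Prop := fun v => idx v = i /\ psat V v phi.

Definition most {S : Type} (ge : S -> S -> Prop) (X : S -> Prop) : S -> Prop :=
  fun s => X s /\ forall v, X v -> ge v s -> ge s v.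

(** The partition (S_i)_{i in I} is given by the block map [idx]
    (S_i = {s | idx s = i}); the relations >=_i are packed into one relation
    [ge] which only relates states of the same block (ge u v means u >=_i v). *)
Record TrustModel : Type := {
  St : Type;
  Ind : Type;
  idx : St -> Ind;
  ge : St -> St -> Prop;
  Rel : St -> St -> Prop;
  Val : nat -> St -> Prop;
  ge_block : forall u v, ge u v -> idx u = idx v;
  Rel_serial : forall s, exists t, Rel s t;
  Rel_trans : forall s t u, Rel s t -> Rel t u -> Rel s u;
  most_nonempty : forall (i : Ind) (phi : pform),
    (exists v, ext idx Val i phi v) -> exists s, most ge (ext idx Val i phi) s
}.

Fixpoint sat (M : TrustModel) (s : St M) (f : tform) : Prop :=
  match f with
  | TProp p => psat (Val M) s p
  | TCond p q =>
      forall u, most (ge M) (ext (idx M) (Val M) (idx M s) p) u ->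
                ext (idx M) (Val M) (idx M s) q u
  | TB a => forall t, Rel M s t -> sat M t a
  | TAnd a b => sat M s a /\ sat M s b
  | TOr a b => sat M s a \/ sat M s b
  | TImp a b => sat M s a -> sat M s b
  | TIff a b => (sat M s a <-> sat M s b)
  | TNeg a => ~ sat M s a
  end.

Definition entails (Phi : tform -> Prop) (a : tform) : Prop :=
  forall (M : TrustModel) (s : St M), (forall b, Phi b -> sat M s b) -> sat M s a.

(* Every theorem of SBTrust is valid, i.e. true at every state of every Trust
   model; assumptions and Modus Ponens then take care of derivations from Phi.
   Tautologies are valid because the truth values of the atoms at a state form
   a Boolean valuation under which [teval] agrees with [sat].  Conditionals
   only depend on the block S_i of the state, which makes S5_F sound, and the
   smoothness condition on [most] is what makes ST and LL+ sound: if
   phi ~> bot holds, then phi is false on the whole block. *)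
From Stdlib Require Import List Bool Classical ClassicalEpsilon.

Definition valid (a : tform) : Prop := forall (M : TrustModel) (s : St M), sat M s a.

Definition truth_value (P : Prop) : bool :=
  if excluded_middle_informative P then true else false.

Lemma truth_value_true (P : Prop) : truth_value P = true <-> P.
Proof.
  unfold truth_value; destruct (excluded_middle_informative P); split; congruence || tauto.
Qed.

Section StateValuation.

Variables (M : TrustModel) (s : St M).

Lemma peval_state_iff_psat (f : pform) :
  peval (fun n => truth_value (Val M n s)) f = true <-> psat (Val M) s f.
Proof.
  induction f; simpl.
  - split; [discriminate | tauto].
  - apply truth_value_true.
  - rewrite andb_true_iff; tauto.
  - rewrite orb_true_iff; tauto.
  - destruct (peval _ f1), (peval _ f2); simpl; intuition congruence.
  - destruct (peval _ f1), (peval _ f2); simpl; intuition congruence.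
  - destruct (peval _ f); simpl; intuition congruence.
Qed.

Lemma teval_state_iff_sat (f : tform) :
  teval (fun n => truth_value (Val M n s))
        (fun p q => truth_value (sat M s (TCond p q)))
        (fun a => truth_value (sat M s (TB a))) f = true <-> sat M s f.
Proof.
  induction f; simpl.
  - apply peval_state_iff_psat.
  - apply (truth_value_true (sat M s (TCond p p0))).
  - apply (truth_value_true (sat M s (TB f))).
  - rewrite andb_true_iff; tauto.
  - rewrite orb_true_iff; tauto.
  - destruct (teval _ _ _ f1), (teval _ _ _ f2); simpl; intuition congruence.
  - destruct (teval _ _ _ f1), (teval _ _ _ f2); simpl; intuition congruence.
  - destruct (teval _ _ _ f); simpl; intuition congruence.
Qed.

End StateValuation.

Lemma tautology_valid (a : tform) : tautology a -> valid a.
Proof. intros Ha M s; apply teval_state_iff_sat, Ha. Qed.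

Section ConditionalSemantics.

Variable M : TrustModel.

Notation ext_M := (ext (idx M) (Val M)).
Notation most_M := (most (ge M)).

Lemma sat_cond_bot_false (s t : St M) (p : pform) :
  sat M s (TCond p PBot) -> idx M t = idx M s -> ~ psat (Val M) t p.
Proof.
  simpl; intros Hbot Et Ht.
  destruct (most_nonempty M (idx M s) p) as [u Hu].
  - exists t; split; assumption.
  - destruct (Hbot u Hu) as [_ []].
Qed.

Lemma sat_cond_ext_congr (s : St M) (p q r : pform) :
  (forall t, ext_M (idx M s) p t <-> ext_M (idx M s) q t) ->
  sat M s (TCond p r) <-> sat M s (TCond q r).
Proof.
  simpl; intros Hpq.
  assert (Hmost : forall u, most_M (ext_M (idx M s) p) u <-> most_M (ext_M (idx M s) q) u).
  { intros u; unfold most; split; intros [Hu Hm]; split.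
    - apply Hpq, Hu.
    - intros v Hv; apply Hm, Hpq, Hv.
    - apply Hpq, Hu.
    - intros v Hv; apply Hm, Hpq, Hv. }
  split; intros Hr u Hu; apply Hr, Hmost, Hu.
Qed.

Lemma sat_lit_same_block (s t : St M) (l : tform) :
  is_lit l -> idx M s = idx M t -> sat M s l -> sat M t l.
Proof. intros [p [q [-> | ->]]] E; simpl; rewrite E; auto. Qed.

Lemma sat_lits_same_block (s t : St M) (l : tform) (ls : list tform) :
  is_lit l -> Forall is_lit ls -> idx M s = idx M t ->
  sat M s (tconj l ls) -> sat M t (tconj l ls).
Proof.
  revert l; induction ls as [|b ls IH]; intros l Hl Hls E; simpl.
  - apply sat_lit_same_block; assumption.
  - inversion Hls; subst; intros [Hsl Hsb]; split.
    + apply (sat_lit_same_block s); assumption.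
    + apply IH; assumption.
Qed.

Lemma sat_conds_most_pconj (s : St M) (psi : pform) (ps : list pform) :
  forall p1, sat M s (tconj (TCond psi p1) (map (TCond psi) ps)) ->
  forall u, most_M (ext_M (idx M s) psi) u -> psat (Val M) u (pconj p1 ps).
Proof.
  induction ps as [|b ps IH]; simpl; intros p1 H u Hu.
  - apply H, Hu.
  - destruct H as [H1 H2]; split.
    + apply H1, Hu.
    + apply (IH b H2 u Hu).
Qed.

End ConditionalSemantics.

Lemma ID_valid (p : pform) : valid (TCond p p).
Proof. intros M s u [Hu _]; exact Hu. Qed.

Lemma ST_valid (p : pform) : valid (TImp (TCond p PBot) (TProp (PNeg p))).
Proof. intros M s Hbot; exact (sat_cond_bot_false M s s p Hbot eq_refl). Qed.

Lemma SH_valid (p q r : pform) :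
  valid (TImp (TCond (PAnd q r) p) (TCond q (PImp r p))).
Proof.
  intros M s H u [[Eu Hq] Hm]; split; [assumption |]; simpl; intro Hr.
  apply H; split.
  - split; simpl; auto.
  - intros v [Ev [Hvq Hvr]] Hge; apply Hm; [split |]; assumption.
Qed.

Lemma LL_valid (p q r : pform) :
  valid (TImp (TCond (PNeg (PIff p q)) PBot) (TIff (TCond p r) (TCond q r))).
Proof.
  intros M s Hbot; apply sat_cond_ext_congr.
  intros t; unfold ext; split; intros [Et Ht]; split; try assumption;
    apply NNPP; intro Hn; apply (sat_cond_bot_false M s t _ Hbot Et); simpl; tauto.
Qed.

Lemma RCK_valid (psi p1 pn1 : pform) (ps : list pform) :
  valid (TProp (PImp (pconj p1 ps) pn1)) ->
  valid (TImp (tconj (TCond psi p1) (map (TCond psi) ps)) (TCond psi pn1)).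
Proof.
  intros Himp M s Hconds u Hu; split.
  - apply Hu.
  - apply (Himp M u), (sat_conds_most_pconj M s psi ps p1 Hconds u Hu).
Qed.

Lemma S5F_valid (l1 : tform) (ls : list tform) (chi : pform) :
  is_lit l1 -> Forall is_lit ls ->
  valid (TImp (tconj l1 ls) (TProp chi)) ->
  valid (TImp (tconj l1 ls) (TCond (PNeg chi) PBot)).
Proof.
  intros Hl1 Hls Hchi M s Hlits u [[Eu Hnchi] _]; exfalso.
  apply Hnchi, (Hchi M u), (sat_lits_same_block M s u); auto.
Qed.

Lemma KB_valid (a b : tform) : valid (TImp (TB (TImp a b)) (TImp (TB a) (TB b))).
Proof. intros M s Hab Ha t Ht; apply Hab, Ha; assumption. Qed.

Lemma DB_valid (a : tform) : valid (TImp (TB a) (TNeg (TB (TNeg a)))).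
Proof.
  intros M s Ha Hna; destruct (Rel_serial M s) as [t Ht].
  apply (Hna t Ht), Ha, Ht.
Qed.

Lemma FourB_valid (a : tform) : valid (TImp (TB a) (TB (TB a))).
Proof. intros M s Ha t Ht u Hu; apply Ha, (Rel_trans M s t u); assumption. Qed.

Lemma Nec_valid (a : tform) : valid a -> valid (TB a).
Proof. intros Ha M s t _; apply Ha. Qed.

Lemma Thm_valid (a : tform) : Thm a -> valid a.
Proof.
  induction 1.
  - apply tautology_valid; assumption.
  - intros M s; apply (IHThm1 M s), IHThm2.
  - apply ID_valid.
  - apply ST_valid.
  - apply SH_valid.
  - apply LL_valid.
  - apply RCK_valid; assumption.
  - apply S5F_valid; assumption.
  - apply KB_valid.
  - apply DB_valid.
  - apply FourB_valid.
  - apply Nec_valid; assumption.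
Qed.

Theorem theorem4 : forall (Phi : tform -> Prop) (a : tform),
  Deriv Phi a -> entails Phi a.
Proof.
  intros Phi a D; induction D as [a Ha | a Ha | a b _ IHab _ IHa];
    intros M s HPhi.
  - apply Thm_valid; assumption.
  - apply HPhi; assumption.
  - apply (IHab M s HPhi), (IHa M s HPhi).
Qed.
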